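(* The ring $s'(\mathbb{Z}^d)$ (for any $d\ge1$) is a Hermite ring.
   Context: For $\mathbf{n}\in\mathbb{Z}^d$, $\|\mathbf{n}\|_1$ denotes the $1$-norm. $s'(\mathbb{Z}^d)$ is the set of all maps $\mathbf{a}:\mathbb{Z}^d\to\mathbb{C}$ for which there exist $M>0$ and $k\in\mathbb{N}$ with $|\mathbf{a}(\mathbf{n})|\le M(1+\|\mathbf{n}\|_1)^k$ for all $\mathbf{n}\in\mathbb{Z}^d$; it is a commutative unital ring under pointwise operations. For a commutative unital ring $R$, $U_N(R)$ denotes the set of $N$-tuples $(a_1,\dots,a_N)\in R^N$ for which there exist $b_1,\dots,b_N\in R$ with $b_1a_1+\cdots+b_Na_N=1$. $R$ is a Hermite ring if for every $N\in\mathbb{N}$ and every $(a_1,\dots,a_N)\in U_N(R)$ there exists a matrix $A\in R^{N\times N}$, invertible in $R^{N\times N}$, whose first column is $(a_1,\dots,a_N)^{\top}$, i.e. $A_{i1}=a_i$ for $i=1,\dots,N$. *)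

From HB Require Import structures.
From mathcomp Require Import all_boot all_order all_algebra.
From mathcomp Require Import boolp classical_sets functions reals.
From mathcomp Require Import complex.

Set Implicit Arguments.
Unset Strict Implicit.
Unset Printing Implicit Defensive.

Import Order.TTheory GRing.Theory Num.Theory.
Local Open Scope ring_scope.
Local Open Scope complex_scope.

Definition unimodular (S : comPzRingType) (N : nat) (a : 'I_N -> S) : Prop :=
  exists b : 'I_N -> S, \sum_(i < N) b i * a i = 1.

Definition invertible_mx (S : comPzRingType) (N : nat) (A : 'M[S]_N) : Prop :=
  exists B : 'M[S]_N, A *m B = 1%:M /\ B *m A = 1%:M.

Definition hermite_ring (S : comPzRingType) : Prop :=
  forall (N : nat) (a : 'I_N.+1 -> S), unimodular a ->
    exists A : 'M[S]_N.+1, invertible_mx A /\ forall i : 'I_N.+1, A i ord0 = a i.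

Definition Zd (d : nat) := 'I_d -> int.

Definition norm1 (d : nat) (n : Zd d) : nat := (\sum_(i < d) `|n i|)%N.

Definition tempered (R : realType) (d : nat) (a : Zd d -> R[i]) : Prop :=
  exists (M : R) (k : nat), 0 < M /\
    forall n : Zd d, `|a n| <= ((M * (1 + (norm1 n)%:R) ^+ k)%:C).

Definition temperedb (R : realType) (d : nat) : {pred Zd d -> R[i]} :=
  fun a => `[< tempered a >].

Section SPrime.
Variables (R : realType) (d : nat).

Lemma lec_real (x y : R) : x <= y -> x%:C <= y%:C.
Proof.
by move=> h; rewrite -subr_ge0 -rmorphB /= ler0c subr_ge0.
Qed.

Let p (n : Zd d) : R := 1 + (norm1 n)%:R.

Let p_ge1 n : 1 <= p n.
Proof. by rewrite /p lerDl. Qed.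

Let p_ge0 n : 0 <= p n.
Proof. exact: le_trans (p_ge1 n). Qed.

Let pexp_le n k1 k2 : p n ^+ k1 <= p n ^+ (k1 + k2).
Proof.
rewrite exprD ler_peMr ?exprn_ge0 //; exact: exprn_ege1.
Qed.

Lemma tempered_subring : subring_closed (@temperedb R d).
Proof.
split.
- apply/asboolP; exists 1, 0%N; split => // n.
  by rewrite expr0 mulr1 /GRing.one /= normr1.
- move=> a b /asboolP [M1 [k1 [M1p Ha]]] /asboolP [M2 [k2 [M2p Hb]]].
  apply/asboolP; exists (M1 + M2), (k1 + k2)%N; split; first exact: addr_gt0.
  move=> n; rewrite /GRing.add /GRing.opp /=.
  apply: le_trans (ler_normB _ _) _.
  apply: le_trans (lerD (Ha n) (Hb n)) _.
  rewrite -rmorphD /=; apply: lec_real; rewrite mulrDl.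
  apply: lerD; apply: ler_wpM2l; [exact: ltW|exact: pexp_le|exact: ltW|].
  by rewrite addnC; apply: pexp_le.
- move=> a b /asboolP [M1 [k1 [M1p Ha]]] /asboolP [M2 [k2 [M2p Hb]]].
  apply/asboolP; exists (M1 * M2), (k1 + k2)%N; split; first exact: mulr_gt0.
  move=> n; rewrite /GRing.mul /= normrM.
  apply: le_trans (ler_pM _ _ (Ha n) (Hb n)) _; rewrite ?normr_ge0 //.
  by rewrite -rmorphM /= exprD; apply: lec_real; rewrite mulrACA.
Qed.

HB.instance Definition _ :=
  GRing.isSubringClosed.Build (Zd d -> R[i]) (@temperedb R d) tempered_subring.

Record sprime := SPrime { sprime_val : Zd d -> R[i];
                          _ : sprime_val \in @temperedb R d }.

HB.instance Definition _ := [isSub for sprime_val].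
HB.instance Definition _ := [Choice of sprime by <:].
HB.instance Definition _ := GRing.SubChoice_isSubComPzRing.Build _ _ sprime tempered_subring.

End SPrime.

From HB Require Import structures.
From mathcomp Require Import all_boot all_order all_algebra.
From mathcomp Require Import boolp classical_sets functions reals.
From mathcomp Require Import complex.
From mathcomp Require Import lra.

(* If sum_i b_i a_i = 1 and w is the pointwise phase of a_0, the element
   u = a_0 + sum_(l >= 1) w conj(a_l) a_l satisfies |u| = |a_0| + sum_l |a_l|^2
   pointwise, and 1 <= sum_i |b_i| |a_i| forces |u| (1 + (sum_i |b_i|)^2) >= 1.
   So 1/u has polynomial growth and u is a unit of s'(Z^d).  Any column whose
   first entry becomes a unit after adding a combination sum_l c_l a_l of the
   others is the first column of [[a_0, -c], [a', 1]], whose determinant is that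
   unit. *)

Set Implicit Arguments.
Unset Strict Implicit.
Unset Printing Implicit Defensive.
Import Order.TTheory GRing.Theory Num.Theory.
Local Open Scope ring_scope.
Local Open Scope complex_scope.

Section ColumnCompletion.
Variable S : comPzRingType.

Lemma invertible_mx_det n (A : 'M[S]_n) (v : S) : v * \det A = 1 -> invertible_mx A.
Proof.
move=> vA; exists (v *: \adj A).
by rewrite -scalemxAr -scalemxAl mul_mx_adj mul_adj_mx scale_scalar_mx vA.
Qed.

Variables (N : nat) (a : 'I_N.+1 -> S) (c : 'I_N -> S).

Definition completion_mx : 'M[S]_(1 + N) :=
  block_mx (a ord0)%:M (- \row_l c l) (\col_l a (lift ord0 l)) 1%:M.

Lemma det_completion_mx :
  \det completion_mx = a ord0 + \sum_(l < N) c l * a (lift ord0 l).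
Proof.
pose U : 'M[S]_(1 + N) := block_mx 1%:M (\row_l c l) 0 1%:M.
have detU : \det U = 1 by rewrite det_ublock !det1 mulr1.
rewrite -[LHS]mul1r -detU -det_mulmx mulmx_block.
rewrite !mul1mx !mul0mx !mulmx1 !add0r addNr det_lblock det1 mulr1.
rewrite -[RHS]det_scalar1; congr (\det _); apply/matrixP => i j.
by rewrite !ord1 !mxE /= mulr1n; congr (_ + _); apply: eq_bigr => l _; rewrite !mxE.
Qed.

Lemma completion_mx_col0 (i : 'I_N.+1) : completion_mx i ord0 = a i.
Proof.
have -> : (ord0 : 'I_(1 + N)) = lshift N ord0 by apply: val_inj.
rewrite /completion_mx; case: (splitP (i : 'I_(1 + N))) => [i0 ei|l ei].
  have -> : i = lshift N i0 by apply: val_inj.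
  by rewrite block_mxEul mxE ord1 eqxx mulr1n; congr a; apply: val_inj.
have -> : i = rshift 1 l by apply: val_inj.
by rewrite block_mxEdl mxE; congr a; apply: val_inj.
Qed.

Lemma column_completion (v : S) :
  v * (a ord0 + \sum_(l < N) c l * a (lift ord0 l)) = 1 ->
  exists A : 'M[S]_N.+1, invertible_mx A /\ forall i, A i ord0 = a i.
Proof.
rewrite -det_completion_mx => vA.
exists completion_mx; split; [exact: invertible_mx_det vA | exact: completion_mx_col0].
Qed.

End ColumnCompletion.

Lemma dual_pairing_lower_bound (R : rcfType) N (y t : 'I_N.+1 -> R) :
  (forall i, 0 <= y i) -> (forall i, 0 <= t i) -> 1 <= \sum_i t i * y i ->
  1 <= (1 + (\sum_i t i) ^+ 2) * (y ord0 + \sum_(l < N) y (lift ord0 l) ^+ 2).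
Proof.
move=> y_ge0 t_ge0 ty_ge1.
set s := y ord0 + _; set T := \sum_i t i.
have T_ge0 : 0 <= T by exact: sumr_ge0.
have sq_ge0 : 0 <= \sum_(l < N) y (lift ord0 l) ^+ 2 by apply: sumr_ge0 => l _; exact: sqr_ge0.
have y0_le : y ord0 <= s by rewrite /s lerDl.
have [s_ge1|s_lt1] := leP 1 s.
  have := sqr_ge0 T; nra.
have y_le_sqrt i : y i <= Num.sqrt s.
  rewrite -(ger0_norm (y_ge0 i)) -sqrtr_sqr ler_sqrt; last first.
    by apply: le_trans y0_le; exact: y_ge0.
  case: (unliftP ord0 i) => [l ->|->].
    rewrite /s (bigD1 l) //= addrCA lerDl; apply: addr_ge0; first exact: y_ge0.
    by apply: sumr_ge0 => k _; exact: sqr_ge0.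
  have := y_ge0 ord0; nra.
have : 1 <= Num.sqrt s * T.
  apply: le_trans ty_ge1 _; rewrite /T mulr_sumr; apply: ler_sum => i _.
  by rewrite mulrC; apply: ler_wpM2r.
have := sqr_sqrtr (le_trans (y_ge0 ord0) y0_le).
have := sqrtr_ge0 s.
nra.
Qed.

Section Phase.
Variable R : rcfType.
Implicit Types z : R[i].

Definition phase z : R[i] := if z == 0 then 1 else z / `|z|.

Lemma norm_phase z : `|phase z| = 1.
Proof.
rewrite /phase; case: eqP => [_|/eqP z0]; first exact: normr1.
by rewrite normrM normfV normr_id divff // normr_eq0.
Qed.

Lemma phase_mul_norm z : phase z * `|z| = z.
Proof.
rewrite /phase; case: eqP => [->|/eqP z0]; first by rewrite normr0 mulr0.
by rewrite divfK // normr_eq0.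
Qed.

Lemma normc_real z : (Normc.normc z)%:C = `|z|.
Proof. by []. Qed.

Lemma normc_ge0 z : 0 <= Normc.normc z.
Proof. by rewrite -ler0c normc_real. Qed.

Lemma norm_phase_combination N (A : 'I_N.+1 -> R[i]) :
  `|A ord0 + \sum_(l < N) phase (A ord0) * (A (lift ord0 l))^* * A (lift ord0 l)|
  = `|A ord0| + \sum_(l < N) `|A (lift ord0 l)| ^+ 2.
Proof.
have -> : \sum_(l < N) phase (A ord0) * (A (lift ord0 l))^* * A (lift ord0 l)
          = phase (A ord0) * \sum_(l < N) `|A (lift ord0 l)| ^+ 2.
  by rewrite mulr_sumr; apply: eq_bigr => l _; rewrite sqr_normc -mulrA [_^* * _]mulrC.
rewrite -{1}(phase_mul_norm (A ord0)) -mulrDr normrM norm_phase mul1r ger0_norm //.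
by apply: addr_ge0 => //; apply: sumr_ge0 => l _; exact: exprn_ge0.
Qed.

Lemma phase_combination_inv_bound N (A B : 'I_N.+1 -> R[i]) :
  \sum_i B i * A i = 1 ->
  let U := A ord0 + \sum_(l < N) phase (A ord0) * (A (lift ord0 l))^* * A (lift ord0 l) in
  U != 0 /\ `|U^-1| <= 1 + (\sum_i `|B i|) ^+ 2.
Proof.
move=> BA U.
have pairing_ge1 : 1 <= \sum_i Normc.normc (B i) * Normc.normc (A i).
  rewrite -lecR rmorph1 rmorph_sum -(@normr1 R[i]) -BA /=.
  apply: le_trans (ler_norm_sum _ _ _) _; apply: ler_sum => i _.
  by rewrite rmorphM /= !normc_real normrM.
have := @dual_pairing_lower_bound R N _ _
  (fun i => normc_ge0 (A i)) (fun i => normc_ge0 (B i)) pairing_ge1.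
rewrite -lecR rmorph1 rmorphM !rmorphD rmorph1 rmorphXn !rmorph_sum /=.
rewrite (eq_bigr (fun i => `|B i|)) //.
rewrite (eq_bigr (fun l => `|A (lift ord0 l)| ^+ 2)); last by move=> l _; rewrite rmorphXn.
rewrite normc_real -norm_phase_combination -/U => bound.
have U_gt0 : 0 < `|U|.
  rewrite lt_def normr_ge0 andbT; apply: contraTneq bound => ->.
  by rewrite mulr0 ler10.
split; first by rewrite -normr_gt0.
by rewrite normfV -div1r ler_pdivrMr.
Qed.

End Phase.

Section SprimeUnits.
Variables (R : realType) (d : nat).
Local Notation S := (sprime R d).
Implicit Types (f : Zd d -> R[i]) (g x u : S).

Lemma tempered_dominated f g : (forall n, `|f n| <= `|val g n|) -> tempered f.
Proof.
move=> fg; have /asboolP [M [k [M_gt0 gM]]] := valP g.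
by exists M, k; split => // n; exact: le_trans (fg n) (gM n).
Qed.

Definition sprime_dominated f g (fg : forall n, `|f n| <= `|val g n|) : S :=
  SPrime (asboolT (tempered_dominated fg)).

Lemma norm_eq_le f g : (forall n, `|f n| = `|val g n|) ->
  forall n, `|f n| <= `|val g n|.
Proof. by move=> fg n; rewrite fg. Qed.

Definition conj_sprime x : S :=
  @sprime_dominated (fun n => (val x n)^*) x (norm_eq_le (fun n => normcJ _)).

Definition norm_sprime x : S :=
  @sprime_dominated (fun n => `|val x n|) x (norm_eq_le (fun n => normr_id _)).

Lemma norm_phase_val1 z n : `|phase z| = `|val (1 : S) n|.
Proof. by rewrite norm_phase rmorph1 normr1. Qed.

Definition phase_sprime x : S :=
  @sprime_dominated (fun n => phase (val x n)) 1
    (norm_eq_le (fun n => norm_phase_val1 (val x n) n)).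

Lemma sprime_unit u g : (forall n, val u n != 0) ->
  (forall n, `|(val u n)^-1| <= `|val g n|) -> exists v : S, v * u = 1.
Proof.
move=> u_neq0 ug; exists (sprime_dominated ug).
apply: val_inj; apply: funext => n; rewrite rmorphM rmorph1; exact: mulVf.
Qed.

Lemma unimodular_phase_combination N (a : 'I_N.+1 -> S) : unimodular a ->
  exists (c : 'I_N -> S) (v : S), v * (a ord0 + \sum_(l < N) c l * a (lift ord0 l)) = 1.
Proof.
move=> [b ba].
pose c l := phase_sprime (a ord0) * conj_sprime (a (lift ord0 l)).
have ba_at n : \sum_i val (b i) n * val (a i) n = 1.
  transitivity (val (\sum_i b i * a i) n); last by rewrite ba rmorph1.
  by rewrite rmorph_sum fct_sumE; apply: eq_bigr => i _; rewrite rmorphM.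
have combE n : val (a ord0 + \sum_(l < N) c l * a (lift ord0 l)) n =
    val (a ord0) n + \sum_(l < N) phase (val (a ord0) n) *
      (val (a (lift ord0 l)) n)^* * val (a (lift ord0 l)) n.
  by rewrite rmorphD rmorph_sum /= fct_sumE.
pose g : S := 1 + (\sum_i norm_sprime (b i)) ^+ 2.
have gE n : val g n = 1 + (\sum_i `|val (b i) n|) ^+ 2.
  by rewrite rmorphD rmorph1 rmorphXn rmorph_sum /= exprfctE fct_sumE.
exists c; apply: (sprime_unit (g := g)) => n; rewrite combE.
  by case: (phase_combination_inv_bound (ba_at n)).
have g_ge0 : 0 <= 1 + (\sum_i `|val (b i) n|) ^+ 2.
  by apply: addr_ge0 => //; apply/exprn_ge0/sumr_ge0 => i _.
by rewrite gE [in X in _ <= X]ger0_norm //; case: (phase_combination_inv_bound (ba_at n)).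
Qed.

End SprimeUnits.

Theorem corollary1p6 (R : realType) (d : nat) :
  (0 < d)%N -> hermite_ring (sprime R d).
Proof.
(* The argument does not use d > 0. *)
move=> _ N a unimod_a.
have [c [v unit_comb]] := unimodular_phase_combination unimod_a.
exact: column_completion unit_comb.
Qed.
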